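(* Every subalgebra of a regular Lie algebra (finite-dimensional, over an infinite field $K$) is regular.
   Context: All algebras are finite-dimensional over an infinite field $K$. For $x\in L$ write $\chi_{\operatorname{ad} x}(t)=\det(t-\operatorname{ad}x)=\sum_{i}a_i(x)t^i$. The rank $\operatorname{rk}L$ is the minimal $r$ such that $a_r(x)\neq 0$ for some $x\in L$. An element $x$ is regular if $a_{\operatorname{rk}L}(x)\neq 0$. A Lie algebra is regular if each of its nonzero elements is regular. *)

From HB Require Import structures.
From mathcomp Require Import all_boot all_order all_algebra.
Set Implicit Arguments. Unset Strict Implicit. Unset Printing Implicit Defensive.
Import GRing.Theory.
Local Open Scope ring_scope.

Definition is_lie_bracket (K : fieldType) (vT : vectType K) (br : vT -> vT -> vT) :=
  [/\ forall (a : K) x y z, br (a *: x + y) z = a *: br x z + br y z,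
      forall (a : K) x y z, br z (a *: x + y) = a *: br z x + br z y,
      forall x, br x x = 0 &
      forall x y z, br x (br y z) + br y (br z x) + br z (br x y) = 0].

Definition is_subalgebra (K : fieldType) (vT : vectType K) (br : vT -> vT -> vT)
    (U : {vspace vT}) :=
  forall x y, x \in U -> y \in U -> br x y \in U.

Definition ad_mx (K : fieldType) (vT : vectType K) (br : vT -> vT -> vT)
    (U : {vspace vT}) (x : vT) : 'M[K]_(\dim U) :=
  \matrix_(i, j) coord (vbasis U) j (br x (vbasis U)`_i).

Definition ad_charpoly (K : fieldType) (vT : vectType K) (br : vT -> vT -> vT)
    (U : {vspace vT}) (x : vT) : {poly K} :=
  char_poly (ad_mx br U x).

Definition is_lie_rank (K : fieldType) (vT : vectType K) (br : vT -> vT -> vT)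
    (U : {vspace vT}) (r : nat) :=
  (exists2 x, x \in U & (ad_charpoly br U x)`_r != 0) /\
  (forall r', (r' < r)%N -> forall x, x \in U -> (ad_charpoly br U x)`_r' = 0).

Definition regular_elt (K : fieldType) (vT : vectType K) (br : vT -> vT -> vT)
    (U : {vspace vT}) (x : vT) :=
  exists r, is_lie_rank br U r /\ (ad_charpoly br U x)`_r != 0.

Definition regular_lie (K : fieldType) (vT : vectType K) (br : vT -> vT -> vT)
    (U : {vspace vT}) :=
  forall x, x \in U -> x != 0 -> regular_elt br U x.

Definition infinite_field (K : fieldType) := forall s : seq K, exists x, x \notin s.

From HB Require Import structures.
From mathcomp Require Import all_boot all_order all_algebra.
From mathcomp Require Import zify.
From Stdlib Require Import Classical Wf_nat.
Set Implicit Arguments. Unset Strict Implicit. Unset Printing Implicit Defensive.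
Import GRing.Theory.
Local Open Scope ring_scope.

(* For x in a subalgebra U of L, chi_L(x) = chi_U(x) * chi_(L/U)(x).  Let
   s = rk U and r = rk L, and let x1 in U be nonzero, so that a_r^L(x1) <> 0.
   If a_s^U(x1) vanished, the coefficient a_r^L(x1) would contain a nonzero
   term a_i^U(x1) b_(r-i)(x1) with i > s.  All these coefficients are
   polynomial along lines, so since K is infinite some z on the line through
   x1 and a point x0 with a_s^U(x0) <> 0 has a_s^U(z) <> 0 and b_(r-i)(z) <> 0.
   Then chi_L(z) has a nonzero coefficient of index <= s + r - i < r,
   contradicting rk L = r. *)

Lemma coefM_lowest (R : nzRingType) (p q : {poly R}) a b :
  (forall i, (i < a)%N -> p`_i = 0) -> (forall j, (j < b)%N -> q`_j = 0) ->
  (p * q)`_(a + b) = p`_a * q`_b.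
Proof.
move=> p_low q_low; rewrite coefM (bigD1 (@Ordinal (a + b).+1 a (leq_addr b a))) //= addKn.
rewrite big1 ?addr0 // => j; rewrite -val_eqE /= => j_neq_a.
have [lt_ja|le_aj] := ltnP j a; first by rewrite p_low ?mul0r.
by rewrite q_low ?mulr0 //; have := ltn_ord j; lia.
Qed.

Lemma coefM_neq0 (R : nzRingType) (p q : {poly R}) r :
  (p * q)`_r != 0 -> exists2 i, (i <= r)%N & p`_i * q`_(r - i) != 0.
Proof.
move=> pq_r; have /existsP[i pq_i] : [exists i : 'I_r.+1, p`_i * q`_(r - i) != 0].
  apply: contraNT pq_r; rewrite negb_exists => /forallP pq0.
  by rewrite coefM; apply/eqP/big1 => i _; apply/eqP/negbNE/pq0.
by exists i => //; rewrite -ltnS.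
Qed.

Lemma coefM_neq0_leq (R : idomainType) (p q : {poly R}) s j :
  (forall i, (i < s)%N -> p`_i = 0) -> p`_s != 0 -> q`_j != 0 ->
  exists2 k, (k <= s + j)%N & (p * q)`_k != 0.
Proof.
move=> p_low p_s q_j.
have [b q_b b_min] := ex_minnP (ex_intro (fun b => q`_b != 0) j q_j).
exists (s + b)%N; first by rewrite leq_add2l b_min.
rewrite (coefM_lowest p_low) ?mulf_neq0 // => i lt_ib.
by apply/eqP; apply: contraTT lt_ib; rewrite -leqNgt; apply: b_min.
Qed.

Lemma infinite_field_uniq_seq (K : fieldType) : infinite_field K ->
  forall n, exists2 s : seq K, uniq s & size s = n.
Proof.
move=> Kinf; elim=> [|n [s s_uniq s_size]]; first by exists [::].
by have [x x_s] := Kinf s; exists (x :: s); rewrite /= ?x_s ?s_size.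
Qed.

Lemma infinite_field_nonroot (K : fieldType) (p : {poly K}) :
  infinite_field K -> p != 0 -> exists c, p.[c] != 0.
Proof.
move=> Kinf p_neq0; have [s s_uniq s_size] := infinite_field_uniq_seq Kinf (size p).
have [s_roots|/allPn[c _ p_c]] := boolP (all (root p) s); last by exists c.
by have := max_poly_roots p_neq0 s_roots s_uniq; rewrite s_size ltnn.
Qed.

Section CharPoly.
Variable R : comNzRingType.

Lemma char_poly_lblock m n (M : 'M[R]_(m + n)) : ursubmx M = 0 ->
  char_poly M = char_poly (ulsubmx M) * char_poly (drsubmx M).
Proof.
move=> ur0; rewrite -{1}(submxK M) ur0 /char_poly /char_poly_mx map_block_mx.
by rewrite (scalar_mx_block m n) opp_block_mx add_block_mx map_mx0 oppr0 addr0 det_lblock.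
Qed.

Lemma char_poly_conj n (P Q A B : 'M[R]_n) :
  P *m Q = 1%:M -> P *m A = B *m P -> char_poly B = char_poly A.
Proof.
move=> PQ PA; have -> : B = P *m A *m Q by rewrite PA -mulmxA PQ mulmx1.
rewrite /char_poly /char_poly_mx !map_mxM.
have -> : 'X%:M - map_mx polyC P *m map_mx polyC A *m map_mx polyC Q =
          map_mx polyC P *m ('X%:M - map_mx polyC A) *m map_mx polyC Q.
  rewrite mulmxBr mulmxBl; congr (_ - _).
  by rewrite mul_mx_scalar -scalemxAl -mul_mx_scalar -map_mxM PQ map_mx1 mul1mx.
by rewrite !det_mulmx mulrAC -det_mulmx -map_mxM PQ map_mx1 det1 mul1r.
Qed.

Lemma coef_char_poly_line n (A C : 'M[R]_n) j :
  exists P : {poly R}, forall c, P.[c] = (char_poly (c *: C + A))`_j.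
Proof.
pose M : 'M[{poly R}]_n := 'X *: map_mx polyC C + map_mx polyC A.
exists (char_poly M)`_j => c.
have -> : c *: C + A = map_mx (horner_eval c) M.
  by apply/matrixP => i l; rewrite !mxE horner_evalE hornerD hornerM hornerX !hornerC.
by rewrite -map_char_poly coef_map.
Qed.

End CharPoly.

Section MatrixOfMap.
Variables (K : fieldType) (vT : vectType K).

Definition mx_of_fun k (X : k.-tuple vT) (f : vT -> vT) : 'M[K]_k :=
  \matrix_(i, j) coord X j (f X`_i).

Lemma char_poly_mx_of_fun_basis (f : vT -> vT) k k' (X : k.-tuple vT) (Y : k'.-tuple vT) :
  linear f -> basis_of fullv X -> basis_of fullv Y ->
  char_poly (mx_of_fun X f) = char_poly (mx_of_fun Y f).
Proof.
move=> f_lin X_basis Y_basis.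
pose F : {linear vT -> vT} := HB.pack f (GRing.isLinear.Build K vT vT *:%R f f_lin).
have eq_kk' : k' = k by rewrite -(size_basis X_basis) (size_basis Y_basis).
subst k'.
have coordX v : v = \sum_i coord X i v *: X`_i.
  by apply: coord_span; rewrite (span_basis X_basis) memvf.
have coordY v : v = \sum_i coord Y i v *: Y`_i.
  by apply: coord_span; rewrite (span_basis Y_basis) memvf.
pose P : 'M[K]_k := \matrix_(i, j) coord Y j X`_i.
pose Q : 'M[K]_k := \matrix_(i, j) coord X j Y`_i.
apply: (@char_poly_conj _ _ P Q).
  apply/matrixP => i j; rewrite !mxE.
  transitivity (coord X j (\sum_l coord Y l X`_i *: Y`_l)).
    by rewrite linear_sum; apply: eq_bigr => l _; rewrite linearZ !mxE.
  by rewrite -coordY coord_free ?(basis_free X_basis).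
apply/matrixP => i j; rewrite !mxE.
transitivity (coord Y j (f X`_i)).
  rewrite {1}(coordY X`_i) -[f]/(F : vT -> vT) linear_sum linear_sum.
  by apply: eq_bigr => l _; rewrite linearZ linearZ !mxE.
rewrite {1}(coordX (f X`_i)) linear_sum; apply: eq_bigr => l _.
by rewrite linearZ !mxE.
Qed.

Definition adapted_basis (U : {vspace vT}) : (\dim U + \dim U^C).-tuple vT :=
  [tuple of vbasis U ++ vbasis U^C].

Lemma adapted_basis_basis U : basis_of fullv (adapted_basis U).
Proof.
rewrite -(addv_complf U); apply: cat_basis; try exact: vbasisP.
by apply/directv_addP; apply: capv_compl.
Qed.

Lemma nth_adapted_basis_lshift U (j : 'I_(\dim U)) :
  (adapted_basis U)`_(lshift (\dim U^C) j) = (vbasis U)`_j.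
Proof. by rewrite /= nth_cat size_tuple ltn_ord. Qed.

Lemma coord_adapted_basis (U : {vspace vT}) u l : u \in U ->
  coord (adapted_basis U) l u = row_mx (\row_j coord (vbasis U) j u) 0 0 l.
Proof.
move=> uU; set a := row_mx _ _.
have -> : u = \sum_l a 0 l *: (adapted_basis U)`_l.
  rewrite big_split_ord /= [X in _ + X]big1 ?addr0 => [|j _]; last first.
    by rewrite row_mxEr mxE scale0r.
  rewrite {1}(coord_vbasis uU); apply: eq_bigr => j _.
  by rewrite row_mxEl mxE nth_adapted_basis_lshift.
by rewrite coord_sum_free ?(basis_free (adapted_basis_basis U)).
Qed.

Lemma char_poly_mx_of_fun_stable (U : {vspace vT}) (f : vT -> vT) :
  linear f -> (forall u, u \in U -> f u \in U) ->
  char_poly (mx_of_fun (vbasis fullv) f) =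
  char_poly (mx_of_fun (vbasis U) f) * char_poly (drsubmx (mx_of_fun (adapted_basis U) f)).
Proof.
move=> f_lin f_stable.
rewrite (char_poly_mx_of_fun_basis f_lin (vbasisP fullv) (adapted_basis_basis U)).
have fU_basis (j : 'I_(\dim U)) : f (vbasis U)`_j \in U.
  by apply: f_stable; apply: vbasis_mem; rewrite mem_nth ?size_tuple.
rewrite char_poly_lblock; last first.
  apply/matrixP => i j.
  by rewrite !mxE nth_adapted_basis_lshift coord_adapted_basis // row_mxEr mxE.
congr (char_poly _ * _); apply/matrixP => i j.
by rewrite !mxE nth_adapted_basis_lshift coord_adapted_basis // row_mxEl mxE.
Qed.

Definition poly_on_lines (phi : vT -> K) :=
  forall x y, exists P : {poly K}, forall c, P.[c] = phi (c *: y + x).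

Lemma poly_on_lines_coef_char_poly n (M : vT -> 'M[K]_n) j :
  linear M -> poly_on_lines (fun x => (char_poly (M x))`_j).
Proof.
move=> M_lin x y; have [P HP] := coef_char_poly_line (M x) (M y) j.
by exists P => c; rewrite HP M_lin.
Qed.

Lemma poly_on_lines_common_nonzero (U : {vspace vT}) (phi psi : vT -> K) x0 x1 :
  infinite_field K -> poly_on_lines phi -> poly_on_lines psi ->
  x0 \in U -> x1 \in U -> phi x0 != 0 -> psi x1 != 0 ->
  exists2 z, z \in U & phi z * psi z != 0.
Proof.
move=> Kinf phi_poly psi_poly x0U x1U phi_x0 psi_x1.
have [P HP] := phi_poly x1 (x0 - x1); have [Q HQ] := psi_poly x1 (x0 - x1).
have P_neq0 : P != 0.
  by apply: contraNneq phi_x0 => P0; have := HP 1; rewrite P0 horner0 scale1r subrK => <-.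
have Q_neq0 : Q != 0.
  by apply: contraNneq psi_x1 => Q0; have := HQ 0; rewrite Q0 horner0 scale0r add0r => <-.
have [c] := infinite_field_nonroot Kinf (mulf_neq0 P_neq0 Q_neq0).
rewrite hornerM HP HQ => phi_psi_c; exists (c *: (x0 - x1) + x1) => //.
by rewrite memvD ?memvZ ?memvB.
Qed.

End MatrixOfMap.

Section LieAlgebra.
Variables (K : fieldType) (vT : vectType K) (br : vT -> vT -> vT).

Lemma lie_rank_exists (U : {vspace vT}) : exists r, is_lie_rank br U r.
Proof.
pose P k := exists2 x, x \in U & (ad_charpoly br U x)`_k != 0.
have P_dim : P (\dim U).
  exists 0; rewrite ?mem0v //; have /monicP := char_poly_monic (ad_mx br U 0).
  by rewrite /lead_coef size_char_poly => ->; rewrite oner_neq0.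
have [r [[Pr r_min] _]] :=
  dec_inh_nat_subset_has_unique_least_element P (fun k => classic (P k)) (ex_intro P _ P_dim).
exists r; split=> // k lt_kr x xU; apply/eqP; apply: contraT => ak.
by have /leP := r_min k (ex_intro2 _ _ x xU ak); rewrite leqNgt lt_kr.
Qed.

Hypothesis br_lie : is_lie_bracket br.

Lemma linear_br x : linear (br x).
Proof. by case: br_lie => _ brD _ _ a u v; apply: brD. Qed.

Lemma linear_mx_of_br k (X : k.-tuple vT) : linear (fun x => mx_of_fun X (br x)).
Proof.
case: br_lie => brD _ _ _ a x y.
by apply/matrixP => i j; rewrite !mxE brD linearP.
Qed.

(* For x in U, the matrix of the action of ad x on L/U. *)
Definition ad_quot_mx (U : {vspace vT}) x := drsubmx (mx_of_fun (adapted_basis U) (br x)).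

Lemma linear_ad_quot_mx U : linear (ad_quot_mx U).
Proof.
by move=> a x y; rewrite /ad_quot_mx linear_mx_of_br; apply/matrixP => i j; rewrite !mxE.
Qed.

Lemma ad_charpoly_subalgebra U x : is_subalgebra br U -> x \in U ->
  ad_charpoly br fullv x = ad_charpoly br U x * char_poly (ad_quot_mx U x).
Proof.
move=> U_sub xU.
exact: char_poly_mx_of_fun_stable (linear_br x) (fun u uU => U_sub x u xU uU).
Qed.

End LieAlgebra.

Theorem lemma2 (K : fieldType) (vT : vectType K) (br : vT -> vT -> vT) :
  infinite_field K ->
  is_lie_bracket br ->
  regular_lie br fullv ->
  forall U : {vspace vT}, is_subalgebra br U -> regular_lie br U.
Proof.
move=> Kinf br_lie L_regular U U_sub x1 x1U x1_neq0.
have [s [[x0 x0U a_x0] U_low]] := lie_rank_exists br U.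
exists s; split; first by split=> //; exists x0.
apply: contraT => /negPn/eqP a_x1.
have [r [[_ L_low] aL_x1]] := L_regular x1 (memvf x1) x1_neq0.
rewrite (ad_charpoly_subalgebra br_lie U_sub x1U) in aL_x1.
have [i le_ir] := coefM_neq0 aL_x1; rewrite mulf_eq0 negb_or => /andP[a_x1i q_x1].
have lt_si : (s < i)%N.
  have [//|/U_low a0|eq_si] := ltngtP s i; first by rewrite a0 ?eqxx in a_x1i.
  by rewrite -eq_si a_x1 eqxx in a_x1i.
have [z zU] := poly_on_lines_common_nonzero Kinf
  (poly_on_lines_coef_char_poly s (linear_mx_of_br br_lie (vbasis U)))
  (poly_on_lines_coef_char_poly (r - i) (linear_ad_quot_mx br_lie U)) x0U x1U a_x0 q_x1.
rewrite mulf_eq0 negb_or => /andP[a_z q_z].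
have [k le_k] := coefM_neq0_leq (fun j lt_js => U_low j lt_js z zU) a_z q_z.
rewrite -(ad_charpoly_subalgebra br_lie U_sub zU) L_low ?memvf ?eqxx //.
lia.
Qed.
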